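(* Let $k\ge2$. If $x^*,y^*\in\Delta^{d-1}$ satisfy $F^k(x^* )=F^k(y^* )=\inf_{x\in\Delta^{d-1}}F^k(x)$, then $x^*=y^*$; i.e. the minimum of $F^k$ on $\Delta^{d-1}$ is attained at a unique point.
   Context: Fix $k\ge2$ and $d=4\cdot3^{k-1}$. $\Delta^{d-1}=\{x\in\mathbb{R}^d: x_i>0,\ \sum_i x_i=1\}$. For $j=1,2,3,4$, $I_j=\{(j-1)3^{k-1}+1,\dots,j\cdot3^{k-1}\}$ and $\Sigma_j(x)=\sum_{l\in I_j}x_l$. Let $\sigma(t)=(1-t)/t$. For $i\in\{1,\dots,d\}$ let $j(i)=1,4,3,2$ according as $i\equiv0,1,2,3\pmod4$, $f_i(x)=\sigma(\Sigma_{j(i)}(x))\sigma(x_i)$, and $F^k(x)=\max_{1\le i\le d}f_i(x)$. *)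

(* real numbers. Points of R^d are functions nat -> R,
   with coordinates indexed 1..d (other values irrelevant). *)
From Stdlib Require Import Reals List Arith.
Import ListNotations.
Open Scope R_scope.

Definition dim (k : nat) : nat := (4 * 3 ^ (k - 1))%nat.

Definition sum_range (x : nat -> R) (a n : nat) : R :=
  fold_right Rplus 0 (map x (seq a n)).

Definition in_simplex (k : nat) (x : nat -> R) : Prop :=
  (forall i, (1 <= i <= dim k)%nat -> 0 < x i) /\ sum_range x 1 (dim k) = 1.

Definition Sigma (k j : nat) (x : nat -> R) : R :=
  sum_range x ((j - 1) * 3 ^ (k - 1) + 1) (3 ^ (k - 1)).

Definition sigma (t : R) : R := (1 - t) / t.

Definition jidx (i : nat) : nat :=
  match (i mod 4)%nat with
  | 0%nat => 1%nat
  | 1%nat => 4%nat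
  | 2%nat => 3%nat
  | _ => 2%nat
  end.

Definition f_i (k i : nat) (x : nat -> R) : R :=
  sigma (Sigma k (jidx i) x) * sigma (x i).

Definition Fk (k : nat) (x : nat -> R) : R :=
  fold_right Rmax (f_i k 1 x) (map (fun i => f_i k i x) (seq 1 (dim k))).

Definition is_inf_on_simplex (k : nat) (v : R) : Prop :=
  (forall x, in_simplex k x -> v <= Fk k x) /\
  (forall l, (forall x, in_simplex k x -> l <= Fk k x) -> l <= v).

(** Let [D = dim k] and let [u] be the uniform point [u i = 1/D];
    every [f_i u] equals [3 (D - 1)], so a minimiser [x] has [f_i x <= 3 (D - 1)]
    for all [i].  This bound says [x i >= (1 - S)/(1 + (3D - 4) S)] with
    [S = Sigma_{j(i)} x], and that convex function of [S] dominates its tangent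
    line [T S] at [S = 1/4], strictly unless [S = 1/4].  Since [j] runs through
    each block index [D/4] times and the four block sums add up to [1], the
    [T]-values also sum to [1], like the [x i].  Hence [x i = T (Sigma_{j(i)} x)]
    for all [i], all block sums are [1/4] and [x = u]. *)

From Pilot Require Import Defs.
From Stdlib Require Import Reals List Arith.
From Stdlib Require Import Lra Lia Psatz.
Open Scope R_scope.

Lemma sum_range_S f a n : sum_range f a (S n) = f a + sum_range f (S a) n.
Proof. reflexivity. Qed.

Lemma sum_range_0 f a : sum_range f a 0 = 0.
Proof. reflexivity. Qed.

Lemma sum_range_add f a n1 n2 :
  sum_range f a (n1 + n2) = sum_range f a n1 + sum_range f (a + n1) n2.
Proof.
  revert a; induction n1 as [|n1 IH]; intro a.
  - rewrite sum_range_0, Nat.add_0_r; simpl; lra.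
  - simpl (S n1 + n2)%nat. rewrite !sum_range_S, IH.
    replace (S a + n1)%nat with (a + S n1)%nat by lia. lra.
Qed.

Lemma sum_range_minus f g a n :
  sum_range (fun i => f i - g i) a n = sum_range f a n - sum_range g a n.
Proof.
  revert a; induction n as [|n IH]; intro a.
  - rewrite !sum_range_0; lra.
  - rewrite !sum_range_S, IH; lra.
Qed.

Lemma sum_range_const c a n : sum_range (fun _ => c) a n = INR n * c.
Proof.
  revert a; induction n as [|n IH]; intro a.
  - rewrite sum_range_0; simpl; lra.
  - rewrite sum_range_S, IH, S_INR; lra.
Qed.

Lemma sum_range_nonneg f a n :
  (forall i, (a <= i < a + n)%nat -> 0 <= f i) -> 0 <= sum_range f a n.
Proof.
  revert a; induction n as [|n IH]; intros a H.
  { rewrite sum_range_0; lra. }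
  rewrite sum_range_S.
  assert (0 <= f a) by (apply H; lia).
  assert (0 <= sum_range f (S a) n) by (apply IH; intros; apply H; lia).
  lra.
Qed.

Lemma sum_range_pos f a n : (0 < n)%nat ->
  (forall i, (a <= i < a + n)%nat -> 0 < f i) -> 0 < sum_range f a n.
Proof.
  intros Hn H. destruct n as [|n]; [lia|].
  rewrite sum_range_S.
  assert (0 < f a) by (apply H; lia).
  assert (0 <= sum_range f (S a) n)
    by (apply sum_range_nonneg; intros; left; apply H; lia).
  lra.
Qed.

Lemma sum_range_eq0_nonneg f a n :
  (forall i, (a <= i < a + n)%nat -> 0 <= f i) ->
  sum_range f a n = 0 -> forall i, (a <= i < a + n)%nat -> f i = 0.
Proof.
  revert a; induction n as [|n IH]; intros a H Hs i Hi; [lia|].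
  rewrite sum_range_S in Hs.
  assert (0 <= f a) by (apply H; lia).
  assert (0 <= sum_range f (S a) n) by (apply sum_range_nonneg; intros; apply H; lia).
  destruct (Nat.eq_dec i a) as [->|Hne]; [lra|].
  apply (IH (S a)); [intros; apply H; lia | lra | lia].
Qed.

Lemma jidx_add4 a r : jidx (4 * a + r) = jidx r.
Proof.
  unfold jidx. replace (4 * a + r)%nat with (r + a * 4)%nat by lia.
  now rewrite Nat.Div0.mod_add.
Qed.

Lemma jidx_range i : (1 <= jidx i <= 4)%nat.
Proof. unfold jidx. destruct (i mod 4) as [|[|[|]]]; lia. Qed.

Lemma sum_range_jidx (G : nat -> R) m a :
  sum_range (fun i => G (jidx i)) (4 * a + 1) (4 * m) =
  INR m * (G 1%nat + G 2%nat + G 3%nat + G 4%nat).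
Proof.
  revert a; induction m as [|m IH]; intro a.
  - rewrite Nat.mul_0_r, sum_range_0; simpl; lra.
  - replace (4 * S m)%nat with (4 + 4 * m)%nat by lia.
    rewrite sum_range_add.
    replace (4 * a + 1 + 4)%nat with (4 * S a + 1)%nat by lia.
    rewrite IH, S_INR, !sum_range_S, sum_range_0.
    replace (S (4 * a + 1)) with (4 * a + 2)%nat by lia.
    replace (S (4 * a + 2)) with (4 * a + 3)%nat by lia.
    replace (S (4 * a + 3)) with (4 * S a + 0)%nat by lia.
    rewrite (jidx_add4 a 1), (jidx_add4 a 2), (jidx_add4 a 3), (jidx_add4 (S a) 0).
    unfold jidx; simpl; lra.
Qed.

Lemma fold_right_Rmax_ge y b l : In y l -> y <= fold_right Rmax b l.
Proof.
  induction l as [|z l IH]; simpl; [tauto|].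
  intros [->|H]; [apply Rmax_l|].
  eapply Rle_trans; [apply IH, H | apply Rmax_r].
Qed.

Lemma fold_right_Rmax_le c b l :
  b <= c -> (forall y, In y l -> y <= c) -> fold_right Rmax b l <= c.
Proof.
  induction l as [|z l IH]; simpl; intros Hb H; [exact Hb|].
  apply Rmax_lub; [apply H; auto | apply IH; auto].
Qed.

Lemma f_i_le_Fk k i x : (1 <= i <= dim k)%nat -> f_i k i x <= Fk k x.
Proof.
  intro Hi. apply fold_right_Rmax_ge, in_map_iff.
  exists i. split; [reflexivity | apply in_seq; lia].
Qed.

Lemma Fk_le k x c : (forall i, f_i k i x <= c) -> Fk k x <= c.
Proof.
  intro H. apply fold_right_Rmax_le; [apply H|].
  intros y Hy. apply in_map_iff in Hy. destruct Hy as [i [<- _]]. apply H.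
Qed.

(* [Defs.sigma] is qualified because [Reals] exports an unrelated [sigma]. *)
Lemma sigma_mul_le_lower_bound c S x : 0 < S -> 0 < x -> 0 < 1 + (c - 1) * S ->
  Defs.sigma S * Defs.sigma x <= c -> (1 - S) / (1 + (c - 1) * S) <= x.
Proof.
  unfold Defs.sigma. intros HS Hx Hden H.
  assert (Hprod : (1 - S) * (1 - x) <= c * (S * x)).
  { replace ((1 - S) * (1 - x)) with ((1 - S) / S * ((1 - x) / x) * (S * x))
      by (field; lra).
    apply Rmult_le_compat_r; [nra | exact H]. }
  apply Rmult_le_reg_r with (1 + (c - 1) * S); [exact Hden|].
  unfold Rdiv. rewrite Rmult_assoc, Rinv_l, Rmult_1_r; nra.
Qed.

(* Tangent line at [S = 1/4] (where it takes the value [1/D]) of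
   [S |-> (1 - S) / (1 + (3 D - 4) S)]. *)
Definition tangent (D S : R) : R := 1 / D - 16 * (D - 1) / (3 * D ^ 2) * (S - 1 / 4).

Lemma tangent_gap D S : 4 / 3 < D -> 0 <= S ->
  ((1 - S) / (1 + (3 * D - 4) * S) - tangent D S) * (1 + (3 * D - 4) * S) =
  16 * (D - 1) * (3 * D - 4) / (3 * D ^ 2) * (S - 1 / 4) ^ 2.
Proof. intros HD HS. unfold tangent. field. nra. Qed.

Lemma tangent_le_sigma_bound D S x : 4 / 3 < D -> 0 < S -> 0 < x ->
  Defs.sigma S * Defs.sigma x <= 3 * (D - 1) ->
  tangent D S <= x /\ (x = tangent D S -> S = 1 / 4).
Proof.
  intros HD HS Hx H.
  assert (Hden : 0 < 1 + (3 * D - 4) * S) by nra.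
  assert (Hlow : (1 - S) / (1 + (3 * D - 4) * S) <= x).
  { replace (3 * D - 4) with (3 * (D - 1) - 1) in * by ring.
    exact (sigma_mul_le_lower_bound _ S x HS Hx Hden H). }
  pose proof (tangent_gap D S HD (Rlt_le _ _ HS)) as Hgap.
  set (gap := (1 - S) / (1 + (3 * D - 4) * S) - tangent D S) in Hgap.
  assert (HK : 0 < 16 * (D - 1) * (3 * D - 4) / (3 * D ^ 2))
    by (apply Rdiv_lt_0_compat; nra).
  assert (Hsq : 0 <= (S - 1 / 4) ^ 2) by apply pow2_ge_0.
  assert (Hgap0 : 0 <= gap) by nra.
  split; [unfold gap in Hgap0; lra|].
  intro Heq.
  assert (Hgap_eq : gap = 0) by (unfold gap in Hgap0 |- *; lra).
  rewrite Hgap_eq, Rmult_0_l in Hgap.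
  assert ((S - 1 / 4) ^ 2 = 0) by nra.
  nra.
Qed.

Lemma block_size_pos k : (0 < 3 ^ (k - 1))%nat.
Proof. apply Nat.neq_0_lt_0, Nat.pow_nonzero; lia. Qed.

Lemma INR_dim k : INR (dim k) = 4 * INR (3 ^ (k - 1)).
Proof. unfold dim. rewrite mult_INR. simpl. lra. Qed.

Lemma INR_dim_ge4 k : 4 <= INR (dim k).
Proof.
  rewrite INR_dim. pose proof (block_size_pos k).
  assert (1 <= INR (3 ^ (k - 1))) by (apply (le_INR 1); lia). lra.
Qed.

Lemma Sigma_pos k j x : in_simplex k x -> (1 <= j <= 4)%nat -> 0 < Sigma k j x.
Proof.
  intros [Hpos _] Hj. unfold Sigma. pose proof (block_size_pos k) as Hm.
  apply sum_range_pos; [exact Hm|]. intros i Hi. apply Hpos. unfold dim.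
  assert (Hj3 : ((j - 1) * 3 ^ (k - 1) <= 3 * 3 ^ (k - 1))%nat)
    by (apply Nat.mul_le_mono_r; lia).
  revert Hi Hj3. generalize ((j - 1) * 3 ^ (k - 1))%nat. lia.
Qed.

Lemma sum_range_Sigma k x :
  sum_range x 1 (dim k) = Sigma k 1 x + Sigma k 2 x + Sigma k 3 x + Sigma k 4 x.
Proof.
  unfold dim, Sigma. set (m := (3 ^ (k - 1))%nat). clearbody m.
  replace (4 * m)%nat with (m + m + m + m)%nat by lia.
  rewrite !sum_range_add.
  replace ((1 - 1) * m + 1)%nat with 1%nat by lia.
  replace ((2 - 1) * m + 1)%nat with (1 + m)%nat by lia.
  replace ((3 - 1) * m + 1)%nat with (1 + (m + m))%nat by lia.
  replace ((4 - 1) * m + 1)%nat with (1 + (m + m + m))%nat by lia.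
  lra.
Qed.

Lemma sum_range_tangent_Sigma k x : sum_range x 1 (dim k) = 1 ->
  sum_range (fun i => tangent (INR (dim k)) (Sigma k (jidx i) x)) 1 (dim k) = 1.
Proof.
  intro Hx1. pose proof (INR_dim_ge4 k) as HD.
  set (T := fun j => tangent (INR (dim k)) (Sigma k j x)).
  change (sum_range (fun i => T (jidx i)) (4 * 0 + 1) (4 * 3 ^ (k - 1)) = 1).
  rewrite sum_range_jidx. rewrite sum_range_Sigma in Hx1. unfold T.
  replace (INR (3 ^ (k - 1))) with (INR (dim k) / 4) by (rewrite INR_dim; field).
  unfold tangent.
  replace (Sigma k 4 x) with (1 - Sigma k 1 x - Sigma k 2 x - Sigma k 3 x) by lra.
  field. lra.
Qed.

Definition uniform (k : nat) : nat -> R := fun _ => 1 / INR (dim k).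

Lemma uniform_in_simplex k : in_simplex k (uniform k).
Proof.
  pose proof (INR_dim_ge4 k). unfold uniform. split.
  - intros; apply Rdiv_lt_0_compat; lra.
  - rewrite sum_range_const. field. lra.
Qed.

Lemma Fk_uniform_le k : Fk k (uniform k) <= 3 * (INR (dim k) - 1).
Proof.
  pose proof (INR_dim_ge4 k) as HD. rewrite INR_dim in HD |- *.
  apply Fk_le. intro i.
  unfold f_i, Sigma, uniform. rewrite sum_range_const. unfold Defs.sigma.
  rewrite INR_dim. right. field. lra.
Qed.

Lemma Fk_le_uniform_eq k x : in_simplex k x ->
  Fk k x <= 3 * (INR (dim k) - 1) ->
  forall i, (1 <= i <= dim k)%nat -> x i = uniform k i.
Proof.
  intros Hx HF. set (D := INR (dim k)).
  assert (HD : 4 / 3 < D) by (pose proof (INR_dim_ge4 k); unfold D; lra).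
  set (gap := fun i => x i - tangent D (Sigma k (jidx i) x)).
  assert (Hbound : forall i, (1 <= i <= dim k)%nat ->
            tangent D (Sigma k (jidx i) x) <= x i /\
            (x i = tangent D (Sigma k (jidx i) x) -> Sigma k (jidx i) x = 1 / 4)).
  { intros i Hi. apply tangent_le_sigma_bound; [exact HD | | apply (proj1 Hx), Hi | ].
    - apply Sigma_pos; [exact Hx | apply jidx_range].
    - eapply Rle_trans; [apply f_i_le_Fk, Hi | exact HF]. }
  assert (Hgap0 : sum_range gap 1 (dim k) = 0).
  { unfold gap. rewrite sum_range_minus, (proj2 Hx).
    unfold D. rewrite sum_range_tangent_Sigma by apply Hx. ring. }
  intros i Hi.
  assert (Hgi : gap i = 0).
  { apply (sum_range_eq0_nonneg gap 1 (dim k)); [| exact Hgap0 | lia].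
    intros l Hl. unfold gap. pose proof (Hbound l ltac:(lia)). lra. }
  unfold gap in Hgi.
  assert (Htan : x i = tangent D (Sigma k (jidx i) x)) by lra.
  pose proof (proj2 (Hbound i Hi) Htan) as HS.
  rewrite Htan, HS. unfold tangent, uniform. fold D. lra.
Qed.

Theorem mainTheorem10 (k : nat) (hk : (2 <= k)%nat) (xs ys : nat -> R)
  (hx : in_simplex k xs) (hy : in_simplex k ys)
  (hFx : is_inf_on_simplex k (Fk k xs)) (hFy : is_inf_on_simplex k (Fk k ys)) :
  forall i, (1 <= i <= dim k)%nat -> xs i = ys i.
Proof.
  assert (Hmin : forall z, is_inf_on_simplex k (Fk k z) ->
            Fk k z <= 3 * (INR (dim k) - 1)).
  { intros z [Hlow _].
    eapply Rle_trans; [apply Hlow, uniform_in_simplex | apply Fk_uniform_le]. }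
  intros i Hi.
  rewrite (Fk_le_uniform_eq k xs hx (Hmin xs hFx) i Hi).
  rewrite (Fk_le_uniform_eq k ys hy (Hmin ys hFy) i Hi).
  reflexivity.
Qed.
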